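(* Let $R$ be a P$v$MD. Then: (1) If $I$ is a strong $t$-ideal of $R$, then $E(I)=S\cap T$, where $S=\bigcap_{P\in \mathrm{Min}(I)}R_P$ and $T=\bigcap\{R_M: M\in t\text{-Max}(R),\ M\not\supseteq I\}$. (2) If $P$ is a $t$-prime of $R$ which is not $t$-invertible, then $E(P)=(R:P)=R_P\cap T$, where $T=\bigcap\{R_M: M\in t\text{-Max}(R),\ M\not\supseteq P\}$. (3) If $P$ is a $t$-prime of $R$ which is not $t$-invertible and $R$ satisfies the ascending chain condition on radical $t$-ideals, then $P$ is a $t$-maximal ideal of the domain $E(P)$.
   Context: $R$ is an integral domain with quotient field $K\neq R$. For nonzero $R$-submodules $A,B$ of $K$, $(A:B)=\{x\in K: xB\subseteq A\}$; $E(I)=(I:I)$. For a nonzero fractional ideal $I$, $I_v=(R:(R:I))$, $I_t=\bigcup\{J_v: J\subseteq I\text{ nonzero finitely generated}\}$; $I$ is a $t$-ideal if $I=I_t$; a $t$-prime is a prime $t$-ideal; $t\text{-Max}(R)$ is the set of ideals maximal among proper $t$-ideals. $I$ is $t$-invertible if $(I(R:I))_t=R$. $R$ is a P$v$MD if $R_M$ is a valuation domain for every $M\in t\text{-Max}(R)$. An ideal $J$ is strong (a trace ideal) if $J=I(R:I)$ for some nonzero ideal $I$, equivalently $(J:J)=(R:J)$. $\mathrm{Min}(I)$ is the set of minimal primes of $I$. In (3), $t$-maximality in $E(P)$ refers to the $t$-operation of the domain $E(P)$. *)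

(* An integral domain R with quotient field K is modelled as a
   subring predicate R : K -> Prop of a field K such that every element of K is
   a quotient of elements of R.  R-submodules of K are predicates K -> Prop. *)
From HB Require Import structures.
From mathcomp Require Import all_boot all_order all_algebra.
Set Implicit Arguments. Unset Strict Implicit. Unset Printing Implicit Defensive.
Import Order.TTheory GRing.Theory Num.Theory.
Local Open Scope ring_scope.

Section Defs.
Variable K : fieldType.
Implicit Types (R D A B I J P M : K -> Prop).

Definition subset A B := forall x, A x -> B x.
Definition seteq A B := forall x, A x <-> B x.
Definition cap A B := fun x => A x /\ B x.

Definition is_subring R :=
  [/\ R 0, R 1, (forall x y, R x -> R y -> R (x - y)) &
      (forall x y, R x -> R y -> R (x * y))].

Definition is_quotient_field R :=
  forall x, exists a b, [/\ R a, R b, b != 0 & x = a / b].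

Definition submodule R A :=
  [/\ A 0, (forall x y, A x -> A y -> A (x + y)) &
      (forall r x, R r -> A x -> A (r * x))].

Definition nonzero A := exists x, A x /\ x != 0.

Definition ideal R I := submodule R I /\ subset I R.

Definition proper R I := exists x, R x /\ ~ I x.

Definition colon A B : K -> Prop := fun x => forall b, B b -> A (x * b).

Definition Eend I := colon I I.

Definition prod A B : K -> Prop := fun x =>
  exists (n : nat) (a b : nat -> K),
    (forall i, A (a i) /\ B (b i)) /\ x = \sum_(i < n) a i * b i.

Definition span R (s : seq K) : K -> Prop := fun x =>
  exists c : nat -> K, (forall i, R (c i)) /\ x = \sum_(i < size s) c i * s`_i.

Definition fin_gen R J := exists s : seq K, seteq J (span R s).

Definition vclos R I := colon R (colon R I).

Definition tclos R I : K -> Prop := fun x =>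
  exists J, [/\ fin_gen R J, nonzero J, subset J I & vclos R J x].

Definition t_ideal R I := [/\ ideal R I, nonzero I & seteq I (tclos R I)].

Definition prime_ideal R P :=
  [/\ ideal R P, proper R P &
      (forall x y, R x -> R y -> P (x * y) -> P x \/ P y)].

Definition t_prime R P := prime_ideal R P /\ t_ideal R P.

Definition t_max R M :=
  [/\ t_ideal R M, proper R M &
      (forall J, t_ideal R J -> proper R J -> subset M J -> subset J M)].

Definition t_invertible R I := seteq (tclos R (prod I (colon R I))) R.

Definition localization R P : K -> Prop := fun x =>
  exists a s, [/\ R a, R s, ~ P s & x = a / s].

Definition valuation_domain D := forall x, x != 0 -> D x \/ D x^-1.

Definition PvMD R := forall M, t_max R M -> valuation_domain (localization R M).

(* strong (trace) ideal: J = I (R:I) for some nonzero ideal I *)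
Definition strong R J :=
  ideal R J /\ exists I, [/\ ideal R I, nonzero I & seteq J (prod I (colon R I))].

Definition min_prime R I P :=
  [/\ prime_ideal R P, subset I P &
      (forall Q, prime_ideal R Q -> subset I Q -> subset Q P -> subset P Q)].

Definition S_min R I : K -> Prop := fun x =>
  forall P, min_prime R I P -> localization R P x.

Definition T_off R I : K -> Prop := fun x =>
  forall M, t_max R M -> ~ subset I M -> localization R M x.

Definition radical R I := forall x (n : nat), R x -> I (x ^+ n) -> I x.

Definition acc_radical_t R :=
  forall I : nat -> K -> Prop,
    (forall n, t_ideal R (I n) /\ radical R (I n)) ->
    (forall n, subset (I n) (I n.+1)) ->
    exists N, forall n, (N <= n)%N -> seteq (I n) (I N).

End Defs.

(* In a PvMD every R_M with M t-maximal is a valuation ring, R is the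
   intersection of these R_M, and every nonzero finitely generated ideal is
   t-invertible; so membership in E(I) or (R:P) can be tested in each R_M.

   (1) For a strong ideal E(I) = (R:I).  An element of (R:I) lies in R_M when
   I is not contained in M; when it is, the radical of I R_M contracts to a
   minimal prime Q of I with I R_M inside Q R_M, so lying in R_Q suffices.
   Conversely, every q in a minimal prime P of I has s q^n in I for some s
   outside P, which puts E(I) inside R_P.

   (2) If P is not t-invertible, P (R:P) lies in a t-maximal ideal M, and a
   comparison in the valuation rings R_M and R_P shows that (R:P) P lies in P.

   (3) ACC on radical t-ideals provides finitely many elements of P that are
   not all in any t-maximal M not containing P.  Adjoined to the generators of
   a finitely generated subideal of P they give a t-invertible ideal of R,
   which forces P to be a t-ideal of E(P); adjoined to any y in E(P) outside P
   they generate an ideal of E(P) whose v-closure contains 1. *)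

From Pilot Require Import Defs.
From mathcomp Require Import all_boot all_order all_algebra.
From mathcomp Require boolp classical_sets.
From mathcomp Require Import ring.
From Stdlib Require Import Classical ClassicalEpsilon.
Set Implicit Arguments. Unset Strict Implicit. Unset Printing Implicit Defensive.
Import GRing.Theory.
Local Open Scope ring_scope.

Local Notation subset := Defs.subset.
Local Notation span := Defs.span.
Local Notation proper := Defs.proper.

Ltac field_nz :=
  field; rewrite ?oner_neq0 ?andbT ?mulf_neq0 //;
  try (repeat (apply/andP; split)); rewrite ?mulf_neq0 ?oner_neq0 //.

Definition chain (T : Type) (F : (T -> Prop) -> Prop) :=
  forall X Y, F X -> F Y -> (forall x, X x -> Y x) \/ (forall x, Y x -> X x).

Definition bigcup (T : Type) (F : (T -> Prop) -> Prop) : T -> Prop :=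
  fun x => exists X, F X /\ X x.

Lemma zorn_above (T : Type) (fam : (T -> Prop) -> Prop) (A0 : T -> Prop) :
  fam A0 ->
  (forall F, (forall X, F X -> fam X) -> chain F -> (exists X, F X) -> fam (bigcup F)) ->
  exists M, [/\ fam M, forall x, A0 x -> M x &
    forall Y, fam Y -> (forall x, M x -> Y x) -> forall x, Y x -> M x].
Proof.
move=> famA0 famU.
pose S := {X : T -> Prop | fam X /\ forall x, A0 x -> X x}.
pose le (a b : S) := boolp.asbool (forall x, proj1_sig a x -> proj1_sig b x).
pose bot : S := exist _ A0 (conj famA0 (fun x h => h)).
have [| | |m mmax] := @classical_sets.ZL_preorder S bot le.
- by move=> a; apply/boolp.asboolP.
- move=> a b c /boolp.asboolP hab /boolp.asboolP hbc; apply/boolp.asboolP => x hx.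
  exact/hbc/hab.
- move=> C Ctot; have [[X0 CX0]|Cempty] := classic (exists X, C X); last first.
    by exists bot => s Cs; case: Cempty; exists s.
  pose F Y := exists X : S, C X /\ proj1_sig X = Y.
  have famF : fam (bigcup F).
    apply: famU; last by exists (proj1_sig X0), X0.
      by move=> Y [X [_ <-]]; case: (proj2_sig X).
    move=> _ _ [X1 [C1 <-]] [X2 [C2 <-]].
    by case: (Ctot _ _ C1 C2) => /boolp.asboolP; [left|right].
  have A0F : forall x, A0 x -> bigcup F x.
    by move=> x hx; exists (proj1_sig X0); split; [exists X0|case: (proj2_sig X0) => _; apply].
  exists (exist (fun X => fam X /\ forall x, A0 x -> X x) _ (conj famF A0F)) => s Cs.
  by apply/boolp.asboolP => x hx; exists (proj1_sig s); split => //; exists s.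
- case: (proj2_sig m) => famm A0m; exists (proj1_sig m); split => // Y famY mY.
  have A0Y : forall x, A0 x -> Y x by move=> x /A0m /mY.
  have /(_ (boolp.asboolT mY)) := mmax (exist _ Y (conj famY A0Y)).
  by move/boolp.asboolP.
Qed.

Section Subring.
Variable K : fieldType.
Variable D : K -> Prop.
Hypothesis HD : is_subring D.
Implicit Types (A B C I J M : K -> Prop) (s t : seq K).

Lemma subring0 : D 0. Proof. by case: HD. Qed.
Lemma subring1 : D 1. Proof. by case: HD. Qed.
Lemma subringB x y : D x -> D y -> D (x - y). Proof. by case: HD => _ _ h _; apply: h. Qed.
Lemma subringM x y : D x -> D y -> D (x * y). Proof. by case: HD => _ _ _ h; apply: h. Qed.
Lemma subringN x : D x -> D (- x).
Proof. by move=> hx; rewrite -sub0r; apply: subringB => //; apply: subring0. Qed.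
Lemma subringD x y : D x -> D y -> D (x + y).
Proof. by move=> hx hy; rewrite -[y]opprK; apply: subringB => //; apply: subringN. Qed.
Lemma subringX x n : D x -> D (x ^+ n).
Proof.
by move=> hx; elim: n => [|n IH]; [rewrite expr0; apply: subring1|rewrite exprS; apply: subringM].
Qed.

Lemma subring_submod : submodule D D.
Proof. by split; [exact: subring0|exact: subringD|exact: subringM]. Qed.

Lemma submod0 A : submodule D A -> A 0. Proof. by case. Qed.
Lemma submodD A x y : submodule D A -> A x -> A y -> A (x + y).
Proof. by case=> _ h _; apply: h. Qed.
Lemma submodM A r x : submodule D A -> D r -> A x -> A (r * x).
Proof. by case=> _ _ h; apply: h. Qed.

Lemma ideal0 I : ideal D I -> I 0. Proof. by case=> /submod0. Qed.
Lemma idealD I x y : ideal D I -> I x -> I y -> I (x + y).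
Proof. by case=> hI _; apply: submodD. Qed.
Lemma idealM I r x : ideal D I -> D r -> I x -> I (r * x).
Proof. by case=> hI _; apply: submodM. Qed.
Lemma idealMr I r x : ideal D I -> D r -> I x -> I (x * r).
Proof. by move=> hI hr hx; rewrite mulrC; apply: idealM. Qed.
Lemma ideal_sub I x : ideal D I -> I x -> D x.
Proof. by case=> _; apply. Qed.

Lemma ideal1 I : ideal D I -> I 1 -> subset D I.
Proof. by move=> hI h1 x hx; rewrite -[x]mulr1; apply: idealM. Qed.

Lemma proper_not1 I : ideal D I -> proper D I -> ~ I 1.
Proof. by move=> hI [x [hx hnx]] /(ideal1 hI)/(_ x hx). Qed.

Lemma not1_proper I : ~ I 1 -> proper D I.
Proof. by move=> h; exists 1; split => //; exact: subring1. Qed.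

Lemma ideal_neq0 I x : ideal D I -> ~ I x -> x != 0.
Proof. by move=> hI hx; apply/eqP => e; apply: hx; rewrite e; apply: ideal0. Qed.

Lemma span_nil x : span D [::] x <-> x = 0.
Proof.
split; first by case=> c [_ ->]; rewrite big_ord0.
by move=> ->; exists (fun _ => 0); split; [move=> _; apply: subring0|rewrite big_ord0].
Qed.

Lemma span_cons a s x :
  span D (a :: s) x <-> exists r y, [/\ D r, span D s y & x = r * a + y].
Proof.
split.
  case=> c [Hc ->]; exists (c 0%N), (\sum_(i < size s) c i.+1 * s`_i); split => //.
    by exists (fun i => c i.+1); split.
  by rewrite /= big_ord_recl /=.
case=> r [y [Hr [c [Hc ->]] ->]].
exists (fun i => if i is k.+1 then c k else r); split; first by case.
by rewrite /= big_ord_recl /=.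
Qed.

Lemma span_min A s : submodule D A -> (forall x, x \in s -> A x) -> subset (span D s) A.
Proof.
move=> hA; elim: s => [|a s IH] hs x.
  by move/span_nil => ->; apply: submod0.
case/span_cons => r [y [hr hy ->]].
apply: submodD => //; first by apply: submodM => //; apply: hs; rewrite inE eqxx.
by apply: IH => // z hz; apply: hs; rewrite inE hz orbT.
Qed.

Lemma span_submod s : submodule D (span D s).
Proof.
elim: s => [|a s IH].
  split; first by apply/span_nil.
    by move=> x y /span_nil -> /span_nil ->; apply/span_nil; rewrite addr0.
  by move=> r x _ /span_nil ->; apply/span_nil; rewrite mulr0.
split.
- apply/span_cons; exists 0, 0; split; [exact: subring0|exact: submod0|by rewrite mul0r addr0].
- move=> x y /span_cons [r1 [y1 [h1 h1' ->]]] /span_cons [r2 [y2 [h2 h2' ->]]].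
  apply/span_cons; exists (r1 + r2), (y1 + y2); split; [exact: subringD|exact: submodD|].
  by rewrite mulrDl -!addrA; congr (_ + _); rewrite addrCA.
- move=> r x hr /span_cons [r1 [y1 [h1 h1' ->]]].
  apply/span_cons; exists (r * r1), (r * y1); split; [exact: subringM|exact: submodM|].
  by rewrite mulrDr mulrA.
Qed.

Lemma span_mem s x : x \in s -> span D s x.
Proof.
elim: s => [//|a s IH]; rewrite inE => /orP [/eqP ->|hx]; apply/span_cons.
  by exists 1, 0; split; [exact: subring1|exact: submod0 (span_submod s)|rewrite mul1r addr0].
by exists 0, x; split; [exact: subring0|exact: IH|rewrite mul0r add0r].
Qed.

Lemma span_catl s t : subset (span D s) (span D (s ++ t)).
Proof.
by apply: span_min; [exact: span_submod|move=> x hx; apply: span_mem; rewrite mem_cat hx].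
Qed.

Lemma span_catr s t : subset (span D t) (span D (s ++ t)).
Proof.
by apply: span_min; [exact: span_submod|move=> x hx; apply: span_mem; rewrite mem_cat hx orbT].
Qed.

Lemma span_mulr s y b : span D s y -> span D [seq x * b | x <- s] (y * b).
Proof.
elim: s y => [|a s IH] y; first by move/span_nil ->; apply/span_nil; rewrite mul0r.
case/span_cons => r [z [hr hz ->]]; apply/span_cons.
by exists r, (z * b); split => //; [apply: IH|rewrite mulrDl mulrA].
Qed.

Lemma span_nonzero_gen s : nonzero (span D s) -> exists x, x \in s /\ x != 0.
Proof.
move=> [y [hy hy0]]; apply: NNPP => hn.
have h0 : submodule D (fun x : K => x = 0).
  by split => // [x z -> ->|r x _ ->]; rewrite ?addr0 ?mulr0.
have hs0 : forall x, x \in s -> x = 0.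
  by move=> x hx; apply: NNPP => hx0; apply: hn; exists x; split => //; apply/eqP.
by move/eqP: hy0; apply; exact: span_min h0 hs0 _ hy.
Qed.

Lemma colon_spanP A s w : submodule D A ->
  colon A (span D s) w <-> (forall x, x \in s -> A (w * x)).
Proof.
move=> hA; split; first by move=> h x hx; apply/h/span_mem.
move=> h b hb.
have hS : submodule D (fun y => A (w * y)).
  split; first by rewrite mulr0; apply: submod0.
    by move=> x y hx hy; rewrite mulrDr; apply: submodD.
  by move=> r x hr hx; rewrite mulrCA; apply: submodM.
exact: (span_min hS h hb).
Qed.

Lemma colon_anti A B C : subset A B -> subset (colon C B) (colon C A).
Proof. by move=> hAB x hx b /hAB; apply: hx. Qed.

Lemma colon_submod A : submodule D (colon D A).
Proof.
split.
- by move=> b _; rewrite mul0r; apply: subring0.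
- by move=> x y hx hy b hb; rewrite mulrDl; apply: subringD; [apply: hx|apply: hy].
- by move=> r x hr hx b hb; rewrite -mulrA; apply: subringM => //; apply: hx.
Qed.

Lemma vclos_ext A : subset A (vclos D A).
Proof. by move=> x hx b hb; rewrite mulrC; apply: hb. Qed.

Lemma vclos_mono A B : subset A B -> subset (vclos D A) (vclos D B).
Proof. by move=> h; apply: colon_anti; apply: colon_anti. Qed.

Lemma vclos_idem A : subset (vclos D (vclos D A)) (vclos D A).
Proof. by apply: colon_anti; apply: vclos_ext. Qed.

Lemma vclos_sub J : subset J D -> subset (vclos D J) D.
Proof. by move=> hJ x hx; rewrite -[x]mulr1; apply: hx => j hj; rewrite mul1r; exact: hJ. Qed.

Lemma tclosP I x : tclos D I x <->
  exists s, [/\ nonzero (span D s), subset (span D s) I & vclos D (span D s) x].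
Proof.
split; last by case=> s [hnz hsub hx]; exists (span D s); split => //; exists s.
case=> J [[s hs] [y [hy hy0]] hJI hx]; exists s; split.
- by exists y; split => //; apply/hs.
- by move=> z /hs; apply: hJI.
- by move: hx; apply: vclos_mono => z /hs.
Qed.

Lemma tclos_ext I : ideal D I -> nonzero I -> subset I (tclos D I).
Proof.
move=> hI [x0 [hx0 hx00]] x hx; apply/tclosP; exists [:: x0; x]; split.
- by exists x0; split => //; apply: span_mem; rewrite inE eqxx.
- by apply: span_min; [case: hI|move=> z; rewrite !inE => /orP[] /eqP ->].
- by apply/vclos_ext/span_mem; rewrite !inE eqxx orbT.
Qed.

Lemma t_ideal_vclos M s : t_ideal D M -> nonzero (span D s) -> subset (span D s) M ->
  subset (vclos D (span D s)) M.
Proof. by case=> _ _ hM hnz hs x hx; apply/hM/tclosP; exists s. Qed.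

Lemma tclos_sub I : ideal D I -> subset (tclos D I) D.
Proof.
case=> _ hID x /tclosP [s [_ hs hx]].
by apply: (@vclos_sub (span D s)) => // z /hs /hID.
Qed.

Lemma tclos_mono I J : subset I J -> subset (tclos D I) (tclos D J).
Proof.
move=> h x /tclosP [s [h1 h2 h3]]; apply/tclosP; exists s; split => //.
by move=> z /h2 /h.
Qed.

Lemma tclos_submod I : ideal D I -> nonzero I -> submodule D (tclos D I).
Proof.
move=> hI hnz; split.
- by apply: tclos_ext => //; apply: ideal0.
- move=> x y /tclosP [s [[z [hz hz0]] hsI hx]] /tclosP [t [_ htI hy]].
  apply/tclosP; exists (s ++ t); split.
  + by exists z; split => //; apply: span_catl.
  + apply: span_min; first by case: hI.
    by move=> w; rewrite mem_cat => /orP[] hw; [apply: hsI|apply: htI]; apply: span_mem.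
  + apply: (@submodD (vclos D (span D (s ++ t)))); first exact: colon_submod.
      by move: hx; apply/vclos_mono/span_catl.
    by move: hy; apply/vclos_mono/span_catr.
- move=> r x hr /tclosP [s [h1 h2 h3]]; apply/tclosP; exists s; split => //.
  exact: (@submodM (vclos D (span D s)) _ _ (colon_submod _)).
Qed.

Lemma tclos_seq I s : ideal D I -> nonzero I -> (forall y, y \in s -> tclos D I y) ->
  exists t, [/\ nonzero (span D t), subset (span D t) I &
    forall y, y \in s -> vclos D (span D t) y].
Proof.
move=> hI [x0 [hx0 hx00]]; elim: s => [|a s IH] hs.
  exists [:: x0]; split => //.
  - by exists x0; split => //; apply: span_mem; rewrite inE.
  - by apply: span_min; [case: hI|move=> z; rewrite inE => /eqP ->].
have [|t [[z [hz hz0]] htI hst]] := IH; first by move=> y hy; apply: hs; rewrite inE hy orbT.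
have /tclosP [u [_ huI hau]] := hs a (mem_head _ _).
exists (t ++ u); split.
- by exists z; split => //; apply: span_catl.
- apply: span_min; first by case: hI.
  by move=> w; rewrite mem_cat => /orP[] hw; [apply: htI|apply: huI]; apply: span_mem.
- move=> y; rewrite inE => /orP [/eqP ->|hy].
    by move: hau; apply/vclos_mono/span_catr.
  by move: (hst y hy); apply/vclos_mono/span_catl.
Qed.

Lemma tclos_idem I : ideal D I -> nonzero I -> subset (tclos D (tclos D I)) (tclos D I).
Proof.
move=> hI hnz x /tclosP [s [_ hsI hx]].
have [|t [htnz htI hst]] := tclos_seq hI hnz (s := s).
  by move=> y hy; apply/hsI/span_mem.
apply/tclosP; exists t; split => //; apply: vclos_idem; move: hx; apply: vclos_mono.
exact: span_min (colon_submod _) hst.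
Qed.

Lemma t_ideal_tclos I : ideal D I -> nonzero I -> t_ideal D (tclos D I).
Proof.
move=> hI hnz; have hIt := tclos_ext hI hnz.
have htI : ideal D (tclos D I) by split; [apply: tclos_submod|apply: tclos_sub].
split => //; first by case: hnz => x [hx hx0]; exists x; split => //; apply: hIt.
move=> x; split; last exact: tclos_idem.
by apply: tclos_ext => //; case: hnz => y [hy hy0]; exists y; split => //; apply: hIt.
Qed.

Lemma t_ideal_colon A : subset (colon D A) D -> nonzero (colon D A) -> t_ideal D (colon D A).
Proof.
move=> hAD hnz; have hI : ideal D (colon D A) by split; [exact: colon_submod|].
split => // x; split; first exact: tclos_ext.
move=> /tclosP [s [_ hs hx]] a ha; apply: hx => w /hs hw.
by rewrite mulrC; apply: hw.
Qed.

Lemma Eend_subring I : submodule D I -> is_subring (Eend I).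
Proof.
move=> hI; split.
- by move=> b _; rewrite mul0r; apply: submod0 hI.
- by move=> b hb; rewrite mul1r.
- move=> x y hx hy b hb; rewrite mulrBl -mulN1r.
  exact: submodD hI (hx b hb) (submodM hI (subringN subring1) (hy b hb)).
- by move=> x y hx hy b hb; rewrite -mulrA; apply/hx/hy.
Qed.

Lemma subring_Eend I : submodule D I -> subset D (Eend I).
Proof. by move=> hI r hr b hb; apply: submodM. Qed.

Lemma EendX I x y n : Eend I x -> I y -> I (x ^+ n * y).
Proof.
by move=> hx hy; elim: n => [|n IH]; [rewrite expr0 mul1r|rewrite exprS -mulrA; apply: hx].
Qed.

End Subring.

Section Domain.
Variable K : fieldType.
Variable R : K -> Prop.
Hypothesis HR : is_subring R.
Implicit Types (A B I J M P Q : K -> Prop).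

Local Notation loc := (localization R).

Lemma primeNM P a b : prime_ideal R P -> R a -> R b -> ~ P a -> ~ P b -> ~ P (a * b).
Proof. by case=> _ _ h ha hb na nb /(h _ _ ha hb) []. Qed.

Lemma prime_cancel P a b : prime_ideal R P -> R a -> R b -> P (a * b) -> ~ P b -> P a.
Proof. by case=> _ _ h ha hb /(h _ _ ha hb) []. Qed.

Lemma prime_not1 P : prime_ideal R P -> ~ P 1.
Proof. by case=> hI hp _; apply: proper_not1 hp. Qed.

Lemma primeNX P a n : prime_ideal R P -> R a -> ~ P a -> ~ P (a ^+ n).
Proof.
move=> hP ha na; elim: n => [|n IH]; first by rewrite expr0; apply: prime_not1.
by rewrite exprS; apply: primeNM => //; apply: subringX.
Qed.

Lemma primeX P a n : prime_ideal R P -> R a -> P (a ^+ n) -> P a.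
Proof. by move=> hP ha h; apply: NNPP => na; exact: primeNX hP ha na h. Qed.

Lemma subring_loc P x : ~ P 1 -> R x -> loc P x.
Proof. by move=> h1 hx; exists x, 1; split => //; [exact: subring1|rewrite divr1]. Qed.

Lemma loc0 P : ~ P 1 -> loc P 0.
Proof. by move=> h; apply: subring_loc => //; exact: subring0. Qed.

Lemma loc_anti P M : subset P M -> subset (loc M) (loc P).
Proof. by move=> h x [a [s [ha hs hns ->]]]; exists a, s; split => // /h. Qed.

Lemma locM P x y : prime_ideal R P -> loc P x -> loc P y -> loc P (x * y).
Proof.
move=> hP [a [s [ha hs hns ->]]] [b [t [hb ht hnt ->]]]; have [hPi _ _] := hP.
have hs0 := ideal_neq0 hPi hns; have ht0 := ideal_neq0 hPi hnt.
by exists (a * b), (s * t); split; [exact: subringM|exact: subringM|exact: primeNM|field_nz].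
Qed.

Lemma locD P x y : prime_ideal R P -> loc P x -> loc P y -> loc P (x + y).
Proof.
move=> hP [a [s [ha hs hns ->]]] [b [t [hb ht hnt ->]]]; have [hPi _ _] := hP.
have hs0 := ideal_neq0 hPi hns; have ht0 := ideal_neq0 hPi hnt.
exists (a * t + b * s), (s * t); split; [|exact: subringM|exact: primeNM|field_nz].
by apply: (subringD HR); apply: subringM.
Qed.

Lemma locX P x n : prime_ideal R P -> loc P x -> loc P (x ^+ n).
Proof.
move=> hP hx; elim: n => [|n IH]; last by rewrite exprS; apply: locM.
by rewrite expr0; apply: subring_loc; [exact: prime_not1|exact: subring1].
Qed.

Lemma locV P a : R a -> ~ P a -> loc P a^-1.
Proof. by move=> ha na; exists 1, a; split => //; [exact: subring1|rewrite div1r]. Qed.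

Lemma loc_subringM P r x : prime_ideal R P -> R r -> loc P x -> loc P (r * x).
Proof. by move=> hP hr hx; apply: locM => //; apply: subring_loc => //; apply: prime_not1. Qed.

Lemma chain_seq (F : (K -> Prop) -> Prop) (s : seq K) :
  chain F -> (exists X, F X) -> (forall x, x \in s -> bigcup F x) ->
  exists C, F C /\ forall x, x \in s -> C x.
Proof.
move=> htot [X0 hX0]; elim: s => [|a s IH] hs; first by exists X0.
have [|C [hC hCs]] := IH; first by move=> x hx; apply: hs; rewrite inE hx orbT.
have [X [hX hXa]] := hs a (mem_head _ _).
case: (htot _ _ hC hX) => h.
  by exists X; split => // x; rewrite inE => /orP [/eqP ->|/hCs /h].
by exists C; split => // x; rewrite inE => /orP [/eqP -> |/hCs]; [apply: h|].
Qed.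

Lemma chain_ideal (F : (K -> Prop) -> Prop) :
  (forall X, F X -> ideal R X) -> chain F -> (exists X, F X) -> ideal R (bigcup F).
Proof.
move=> hid htot [X0 hX0]; split; last by move=> x [X [/hid hX hx]]; apply: ideal_sub hx.
split.
- by exists X0; split => //; exact: ideal0 (hid _ hX0).
- move=> x y [X [hX hx]] [Y [hY hy]].
  case: (htot _ _ hX hY) => h.
    by exists Y; split => //; apply: idealD (hid _ hY) (h _ hx) hy.
  by exists X; split => //; apply: idealD (hid _ hX) hx (h _ hy).
- by move=> r x hr [X [hX hx]]; exists X; split => //; apply: idealM (hid _ hX) hr hx.
Qed.

Lemma chain_t_ideal (F : (K -> Prop) -> Prop) :
  (forall X, F X -> t_ideal R X /\ ~ X 1) -> chain F -> (exists X, F X) ->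
  t_ideal R (bigcup F) /\ ~ bigcup F 1.
Proof.
move=> hF htot hne.
have hU : ideal R (bigcup F) by apply: chain_ideal => // X /hF [[]].
split; last by case=> X [/hF [_ hX1] /hX1].
split => //.
  by case: hne => X hX; have [[_ [x [hx hx0]] _] _] := hF _ hX; exists x; split => //; exists X.
move=> x; split.
  case=> X [hX hx]; have [[_ _ hXt] _] := hF _ hX.
  by move: (proj1 (hXt x) hx); apply: tclos_mono => y hy; exists X.
move=> /tclosP [s [hnz hs hx]].
have [C [hC hCs]] := chain_seq htot hne (fun y hy => hs y (span_mem HR hy)).
have [hCt _] := hF _ hC; exists C; split => //.
by apply: (t_ideal_vclos hCt hnz _ hx); apply: span_min => //; case: hCt => [[]].
Qed.

Lemma exists_tmax A : t_ideal R A -> ~ A 1 -> exists M, t_max R M /\ subset A M.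
Proof.
move=> hA hA1.
have [|M [[hM hM1] hAM hmax]] := @zorn_above K (fun X => t_ideal R X /\ ~ X 1) A (conj hA hA1).
  exact: chain_t_ideal.
exists M; split => //; split => //; first exact: not1_proper.
move=> J hJ hJp hMJ; apply: hmax => //; split => //.
by apply: proper_not1 hJp; case: hJ.
Qed.

Lemma exists_tmax_tclos I : ideal R I -> nonzero I -> ~ tclos R I 1 ->
  exists M, t_max R M /\ subset I M.
Proof.
move=> hI hnz h1; have [M [hM hsub]] := exists_tmax (t_ideal_tclos HR hI hnz) h1.
by exists M; split => // x hx; apply/hsub/tclos_ext.
Qed.

Lemma tmax_not1 M : t_max R M -> ~ M 1.
Proof. by case=> [[hM _ _] hp _]; apply: proper_not1 hp. Qed.

Lemma tmax_ideal M : t_max R M -> ideal R M. Proof. by case=> [[]]. Qed.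

Lemma t_ideal_quotient M b : t_ideal R M -> R b -> ~ M b ->
  t_ideal R (fun r => R r /\ M (r * b)) /\ subset M (fun r => R r /\ M (r * b)).
Proof.
move=> hMt hb hnb; have [hM [m [hm hm0]] _] := hMt.
have hb0 := ideal_neq0 hM hnb.
have hC : ideal R (fun r => R r /\ M (r * b)).
  split; last by move=> x [].
  split.
  - by split; [exact: subring0|rewrite mul0r; apply: ideal0 hM].
  - move=> x y [hx hx'] [hy hy'].
    by split; [exact: (subringD HR)|rewrite mulrDl; apply: (idealD hM)].
  - by move=> r x hr [hx hx']; split; [exact: (subringM HR)|rewrite -mulrA; apply: (idealM hM)].
have hMC : subset M (fun r => R r /\ M (r * b)).
  by move=> r hr; split; [exact: ideal_sub hM hr|apply: (idealMr hM)].
have hCnz : nonzero (fun r => R r /\ M (r * b)) by exists m; split => //; apply: hMC.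
split => //; split => // x; split; first exact: (tclos_ext HR hC hCnz).
move=> /tclosP [s [[y [hy hy0]] hs hx]]; split.
  by apply: (@vclos_sub _ _ (span R s)) => // z /hs [].
apply: (@t_ideal_vclos _ _ _ [seq z * b | z <- s] hMt).
- by exists (y * b); split; [exact: span_mulr|rewrite mulf_neq0].
- apply: span_min => //; first by case: hM.
  by move=> z /mapP [w hw ->]; case: (hs w (span_mem HR hw)).
- move=> w hw.
  have : colon R (span R s) (b * w).
    apply/(colon_spanP HR _ _ (subring_submod HR)) => z hz.
    rewrite (mulrC b) -mulrA (mulrC b); apply: hw; apply: span_mem => //.
    by apply/mapP; exists z.
  by move/hx; rewrite mulrA.
Qed.

Lemma tmax_prime M : t_max R M -> prime_ideal R M.
Proof.
move=> hM; have [hMt hMp hmax] := hM.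
split => //; first exact: tmax_ideal.
move=> a b ha hb hab; apply: NNPP => /not_or_and [na nb].
have [hCt hMC] := t_ideal_quotient hMt hb nb.
have hC1 : ~ (R 1 /\ M (1 * b)) by case=> _; rewrite mul1r.
exact/na/(hmax _ hCt (not1_proper HR hC1) hMC).
Qed.

Lemma colon_span1P y x : colon R (span R [:: 1; y]) x <-> R x /\ R (x * y).
Proof.
rewrite (colon_spanP HR _ _ (subring_submod HR)); split.
  by move=> h; split; [rewrite -[x]mulr1|]; apply: h; rewrite !inE eqxx ?orbT.
by case=> h1 h2 z; rewrite !inE => /orP [] /eqP ->; rewrite ?mulr1.
Qed.

Lemma bigcap_loc_tmax y : is_quotient_field R ->
  (forall M, t_max R M -> loc M y) -> R y.
Proof.
move=> HK hy; apply: NNPP => ny.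
have [a [b [ha hb hb0 ey]]] := HK y.
have hbC : colon R (span R [:: 1; y]) b by apply/colon_span1P; rewrite ey mulrC divfK.
have hCt : t_ideal R (colon R (span R [:: 1; y])).
  apply: t_ideal_colon => //; last by exists b.
  by move=> x /colon_span1P [].
have hC1 : ~ colon R (span R [:: 1; y]) 1 by move=> /colon_span1P [_]; rewrite mul1r.
have [M [hM hCM]] := exists_tmax hCt hC1.
have [c [s [hc hs hns e]]] := hy M hM.
have hs0 := ideal_neq0 (tmax_ideal hM) hns.
by apply/hns/hCM/colon_span1P; rewrite e mulrC divfK.
Qed.

Lemma prod_single A B a b : A a -> B b -> Defs.prod A B (a * b).
Proof. by move=> ha hb; exists 1%N, (fun _ => a), (fun _ => b); rewrite big_ord1. Qed.

Lemma prodD A B x y : Defs.prod A B x -> Defs.prod A B y -> Defs.prod A B (x + y).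
Proof.
case=> n1 [a1 [b1 [h1 ->]]] [n2 [a2 [b2 [h2 ->]]]].
exists (n1 + n2)%N, (fun i => if (i < n1)%N then a1 i else a2 (i - n1)%N),
  (fun i => if (i < n1)%N then b1 i else b2 (i - n1)%N); split.
  by move=> i; case: ifP.
rewrite big_split_ord /=; congr (_ + _); apply: eq_bigr => i _ /=.
  by rewrite ltn_ord.
by rewrite ltnNge leq_addr /= addKn.
Qed.

Lemma prod_mono A B A' B' : subset A A' -> subset B B' ->
  subset (Defs.prod A B) (Defs.prod A' B').
Proof.
move=> hA hB x [n [a [b [h ->]]]]; exists n, a, b; split => //.
by move=> i; case: (h i) => ha hb; split; [apply: hA|apply: hB].
Qed.

Lemma prod_ideal A B : ideal R A -> subset B (colon R A) -> B 1 -> ideal R (Defs.prod A B).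
Proof.
move=> hA hB hB1; split; first split.
- by rewrite -(mulr1 0); apply: prod_single => //; exact: ideal0 hA.
- by move=> x y; apply: prodD.
- move=> r x hr [n [a [b [h ->]]]]; exists n, (fun i => r * a i), b; split.
    by move=> i; case: (h i) => ha hb; split => //; apply: idealM hA hr ha.
  by rewrite mulr_sumr; apply: eq_bigr => i _; rewrite mulrA.
- move=> x [n [a [b [h ->]]]]; apply: (big_ind R); [exact: subring0|exact: subringD|].
  by move=> i _; case: (h i) => ha /hB hb; rewrite mulrC; apply: hb.
Qed.

Lemma colon1 A : subset A R -> colon R A 1.
Proof. by move=> hA b hb; rewrite mul1r; apply: hA. Qed.

Lemma trace_ideal P : ideal R P -> nonzero P ->
  [/\ ideal R (Defs.prod P (colon R P)), nonzero (Defs.prod P (colon R P)) &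
      subset P (Defs.prod P (colon R P))].
Proof.
move=> hP [x [hx hx0]]; have hPsub : subset P R by case: hP.
have hPtr : subset P (Defs.prod P (colon R P)).
  by move=> a ha; rewrite -[a]mulr1; apply: prod_single => //; apply: colon1.
split => //; first by apply: prod_ideal => //; apply: colon1.
by exists x; split => //; apply: hPtr.
Qed.

Lemma t_invertible_tclos1 P : ideal R P -> nonzero P ->
  tclos R (Defs.prod P (colon R P)) 1 -> t_invertible R P.
Proof.
move=> hP hnz h1; have [hI hInz _] := trace_ideal hP hnz.
have [hT _ _] := t_ideal_tclos HR hI hInz.
by move=> x; split => hx; [exact: (tclos_sub hI hx)|exact: (ideal1 hT h1 hx)].
Qed.

Lemma loc_colon_not_sub A M x : subset A R -> ideal R M -> colon R A x -> ~ subset A M ->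
  loc M x.
Proof.
move=> hAR hM hx hn; have [p hp] := not_all_ex_not _ _ hn.
have [hAp hMp] := imply_to_and _ _ hp.
have hp0 := ideal_neq0 hM hMp.
by exists (x * p), p; split => //; [exact: hx|exact: hAR|field_nz].
Qed.

Lemma strong_Eend_colon I : strong R I -> seteq (Eend I) (colon R I).
Proof.
case=> hI [A [hA hAnz hIA]] x; split; first by move=> hx b hb; exact: ideal_sub hI (hx b hb).
move=> hx y /hIA [n [a [b [hab ->]]]]; apply/hIA.
exists n, a, (fun i => x * b i); split; last first.
  by rewrite mulr_sumr; apply: eq_bigr => i _; rewrite mulrCA.
move=> i; case: (hab i) => hai hbi; split => // a' ha'.
by rewrite -mulrA (mulrC (b i)); apply: hx; apply/hIA; apply: prod_single.
Qed.

Lemma ideal_adjoin Q c : ideal R Q -> R c ->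
  ideal R (fun y => exists z r, [/\ Q z, R r & y = z + r * c]).
Proof.
move=> hQ hc; split; first split.
- by exists 0, 0; split; [exact: ideal0 hQ|exact: subring0|rewrite mul0r addr0].
- move=> x y [z1 [r1 [h1 h1' ->]]] [z2 [r2 [h2 h2' ->]]].
  by exists (z1 + z2), (r1 + r2); split; [exact: (idealD hQ)|exact: (subringD HR)|ring].
- move=> r x hr [z1 [r1 [h1 h1' ->]]].
  by exists (r * z1), (r * r1); split; [exact: (idealM hQ)|exact: (subringM HR)|ring].
- move=> x [z [r [hz hr ->]]].
  by apply: (subringD HR); [exact: ideal_sub hQ hz|exact: (subringM HR)].
Qed.

Section MaximalDisjoint.
Variables (S Q : K -> Prop).
Hypotheses (hS1 : S 1) (hSM : forall s t, S s -> S t -> S (s * t)).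
Hypotheses (hQ : ideal R Q) (hQS : forall s, S s -> ~ Q s).
Hypothesis hQmax :
  forall Y, ideal R Y -> (forall s, S s -> ~ Y s) -> subset Q Y -> subset Y Q.

Lemma maximal_disjoint_meets c : R c -> ~ Q c ->
  exists s z r, [/\ S s, Q z, R r & s = z + r * c].
Proof.
move=> hc hnc; apply: NNPP => hne; apply/hnc/(hQmax (ideal_adjoin hQ hc)).
- by move=> s hs [z [r [hz hr e]]]; apply: hne; exists s, z, r.
- by move=> z hz; exists z, 0; split => //; [exact: subring0|rewrite mul0r addr0].
- by exists 0, 1; split; [exact: ideal0 hQ|exact: subring1|rewrite mul1r add0r].
Qed.

Lemma maximal_disjoint_prime : prime_ideal R Q.
Proof.
split => //; first exact: (not1_proper HR (hQS hS1)).
move=> a b ha hb hab; apply: NNPP => /not_or_and [na nb].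
have [s1 [z1 [r1 [hs1 hz1 hr1 e1]]]] := maximal_disjoint_meets ha na.
have [s2 [z2 [r2 [hs2 hz2 hr2 e2]]]] := maximal_disjoint_meets hb nb.
apply: (hQS (hSM hs1 hs2)); rewrite e1 e2.
have -> : (z1 + r1 * a) * (z2 + r2 * b) =
  (z2 + r2 * b) * z1 + (r1 * a) * z2 + (r1 * r2) * (a * b) by ring.
have hRz2 := ideal_sub hQ hz2.
apply: (idealD hQ); last exact: idealM hQ (subringM HR hr1 hr2) hab.
apply: (idealD hQ); first exact: idealM hQ (subringD HR hRz2 (subringM HR hr2 hb)) hz1.
exact: idealM hQ (subringM HR hr1 ha) hz2.
Qed.

End MaximalDisjoint.

Lemma min_prime_witness I P q : ideal R I -> min_prime R I P -> P q ->
  exists s n, [/\ R s, ~ P s & I (s * q ^+ n)].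
Proof.
move=> hI [hPp hIP hmin] hq.
pose S y := exists s n, [/\ R s, ~ P s & y = s * q ^+ n].
apply: NNPP => hn; have hIS : forall y, S y -> ~ I y.
  by move=> _ [s [n [hs hns ->]]] hsn; apply: hn; exists s, n.
have hS1 : S 1 by exists 1, 0%N; split; [exact: subring1|exact: prime_not1|rewrite mulr1].
have hSM : forall x y, S x -> S y -> S (x * y).
  move=> _ _ [s1 [n1 [h1 hn1 ->]]] [s2 [n2 [h2 hn2 ->]]].
  exists (s1 * s2), (n1 + n2)%N; split; [exact: subringM|exact: primeNM|].
  by rewrite exprD; ring.
have [|Q [[hQ hQS] hIQ hQmax]] :=
  @zorn_above K (fun X => ideal R X /\ forall y, S y -> ~ X y) I (conj hI hIS).
  move=> F hF htot hne; split; first by apply: chain_ideal => // X /hF [].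
  by move=> y hy [X [/hF [_ hXS] hXy]]; apply: hXS hXy.
have hQp : prime_ideal R Q.
  by apply: maximal_disjoint_prime hS1 hSM hQ hQS _ => Y hY hYS; apply: hQmax.
have hQP : subset Q P.
  move=> r hr; apply: NNPP => hnr; apply: (hQS r) => //.
  by exists r, 0%N; split; [exact: ideal_sub hQ hr| |rewrite expr0 mulr1].
apply: (hQS q); first by exists 1, 1%N; split; [exact: subring1|exact: prime_not1|rewrite mul1r].
exact: hmin hQp hIQ hQP _ hq.
Qed.

Lemma min_prime_witness_seq I P (s : seq K) : ideal R I -> min_prime R I P ->
  (forall x, x \in s -> P x) ->
  exists u N, [/\ R u, ~ P u & forall x, x \in s -> I (u * x ^+ N)].
Proof.
move=> hI hmin; have [hPp _ _] := hmin; have [hPi _ _] := hPp.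
elim: s => [|a s IH] hs.
  by exists 1, 0%N; split => //; [exact: subring1|exact: prime_not1 hPp].
have [|u1 [N1 [hu1 hnu1 h1]]] := IH; first by move=> x hx; apply: hs; rewrite inE hx orbT.
have [u2 [n2 [hu2 hnu2 h2]]] := min_prime_witness hI hmin (hs a (mem_head _ _)).
exists (u1 * u2), (N1 + n2)%N; split; [exact: subringM|exact: (primeNM hPp)|].
move=> x; rewrite inE => /orP [/eqP ->|hx].
  have -> : u1 * u2 * a ^+ (N1 + n2) = (u1 * a ^+ N1) * (u2 * a ^+ n2) by rewrite exprD; ring.
  apply: (idealM hI _ h2); apply: (subringM HR hu1); apply: (subringX HR).
  exact: ideal_sub hPi (hs a (mem_head _ _)).
have -> : u1 * u2 * x ^+ (N1 + n2) = (u2 * x ^+ n2) * (u1 * x ^+ N1) by rewrite exprD; ring.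
apply: (idealM hI _ (h1 x hx)); apply: (subringM HR hu2); apply: (subringX HR).
by apply: (ideal_sub hPi); apply: hs; rewrite inE hx orbT.
Qed.

Lemma colon_adjoinX A a N : R a ->
  subset (colon R (fun y => A y \/ y = a)) R ->
  subset (colon R (fun y => A y \/ y = a ^+ N)) R.
Proof.
move=> ha hU; elim: N => [|N IH] w hw.
  by rewrite -[w]mulr1; apply: hw; right; rewrite expr0.
apply: hU => z [hz|->]; first by apply: hw; left.
apply: IH => y [hy|->].
  by rewrite mulrAC; apply: (subringM HR) => //; apply: hw; left.
by rewrite -mulrA -exprS; apply: hw; right.
Qed.

Lemma colon_adjoin_seqX A (s : seq K) N : (forall x, x \in s -> R x) ->
  subset (colon R (fun y => A y \/ y \in s)) R ->
  subset (colon R (fun y => A y \/ y \in [seq x ^+ N | x <- s])) R.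
Proof.
elim: s A => [|a s IH] A hs hU w hw.
  by apply: hU; apply: colon_anti hw => y [h|//]; left.
have hs' : forall x, x \in s -> R x by move=> x hx; apply: hs; rewrite inE hx orbT.
have hUa : subset (colon R (fun y => (A y \/ y \in s) \/ y = a)) R.
  move=> v hv; apply: hU; apply: colon_anti hv => y [h|].
    by left; left.
  by rewrite inE => /orP [/eqP ->|h]; [right|left; right].
have hUaN := @colon_adjoinX _ a N (hs a (mem_head _ _)) hUa.
have hUaN' : subset (colon R (fun y => (A y \/ y = a ^+ N) \/ y \in s)) R.
  by move=> v hv; apply: hUaN; apply: colon_anti hv => y [[h|h]|h]; [left; left|right|left; right].
apply: (IH _ hs' hUaN'); apply: colon_anti hw => y [[h|->]|h]; first by left.
  by right; rewrite /= inE eqxx.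
by right; rewrite /= inE h orbT.
Qed.

Lemma min_prime_sub_tmax I P : t_ideal R I -> min_prime R I P ->
  exists M, t_max R M /\ subset P M.
Proof.
move=> hIt hmin; have [hI [y [hy hy0]] _] := hIt; have [hPp hIP _] := hmin.
have [hPi _ _] := hPp.
have hPnz : nonzero P by exists y; split => //; apply: hIP.
have [h1|] := classic (tclos R P 1); last exact: exists_tmax_tclos.
exfalso; have /tclosP [s [hnz hsP hv]] := h1.
have hsP' : forall x, x \in s -> P x by move=> x hx; apply/hsP/span_mem.
have hsR : forall x, x \in s -> R x by move=> x /hsP'; apply: ideal_sub hPi.
have [u [N [hu hnu huI]]] := min_prime_witness_seq hI hmin hsP'.
have hU : subset (colon R (fun y => False \/ y \in [seq x ^+ N | x <- s])) R.
  apply: colon_adjoin_seqX => // w hw; rewrite -[w]mul1r; apply: hv.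
  by apply/(colon_spanP HR _ _ (subring_submod HR)) => x hx; apply: hw; right.
pose J := span R [seq u * x ^+ N | x <- s].
have hJI : subset J I.
  by apply: span_min => //; [case: hI|move=> _ /mapP [x hx ->]; apply: huI].
have hJnz : nonzero J.
  have [x0 [hx0 hx00]] := span_nonzero_gen HR hnz.
  exists (u * x0 ^+ N); split; first by apply: (span_mem HR); apply/mapP; exists x0.
  by rewrite mulf_neq0 ?expf_neq0 //; apply: ideal_neq0 hPi hnu.
apply/hnu/hIP/(t_ideal_vclos hIt hJnz hJI) => b hb.
rewrite mulrC; apply: hU => _ [//|/mapP [x hx ->]].
by rewrite -mulrA; apply: hb; apply: (span_mem HR); apply/mapP; exists x.
Qed.

End Domain.

Section PvMD.
Variable K : fieldType.
Variable R : K -> Prop.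
Hypothesis HR : is_subring R.
Hypothesis HK : is_quotient_field R.
Hypothesis HP : PvMD R.
Implicit Types (A I J M P Q : K -> Prop).

Local Notation loc := (localization R).

Lemma valuation_loc_sub_tmax P M : t_max R M -> subset P M -> valuation_domain (loc P).
Proof. by move=> hM hPM x hx; case: (HP hM hx) => h; [left|right]; apply: loc_anti h. Qed.

Lemma loc_tmax_total M x y : t_max R M -> R x -> R y -> x != 0 -> y != 0 ->
  loc M (y / x) \/ loc M (x / y).
Proof.
move=> hM hx hy hx0 hy0; have hyx : y / x != 0 by rewrite mulf_neq0 ?invr_eq0.
by case: (HP hM hyx) => h; [left|right; rewrite invf_div in h].
Qed.

Lemma notin_loc_inv P x : prime_ideal R P -> valuation_domain (loc P) -> ~ loc P x ->
  exists q s, [/\ R q, R s, P q, ~ P s & x * q = s].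
Proof.
move=> hP hval hx; have [hPi _ _] := hP.
have hx0 : x != 0 by apply: contra_not_neq hx => ->; exact: (loc0 HR (prime_not1 hP)).
case: (hval _ hx0) => // -[q [s [hq hs hns e]]].
have hs0 := ideal_neq0 hPi hns.
have hxq : x * q = s by rewrite -[q](divfK hs0) -e mulrA divff ?mul1r.
exists q, s; split => //; apply: NNPP => nq; apply: hx; exists s, q; split => //.
by rewrite -hxq mulfK // (ideal_neq0 hPi nq).
Qed.

Lemma loc_min_generator M (s : seq K) : t_max R M -> (exists x, x \in s /\ x != 0) ->
  exists f, [/\ f \in s, f != 0 & forall x, x \in s -> loc M (x / f)].
Proof.
move=> hM; have hMp := tmax_prime HR hM; have hM1 := tmax_not1 hM.
have hR1 := subring_loc HR hM1 (subring1 HR).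
elim: s => [|a s IH]; first by case=> x [].
move=> hex; have [hs|hs] := classic (exists x, x \in s /\ x != 0); last first.
  have ha0 : a != 0.
    case: hex => x [hx hx0]; move: hx; rewrite inE => /orP [/eqP <- //|hx].
    by case: hs; exists x.
  exists a; split => //; first by rewrite inE eqxx.
  move=> x; rewrite inE => /orP [/eqP ->|hx]; first by rewrite divff.
  have -> : x = 0 by apply: NNPP => hx0; apply: hs; exists x; split => //; apply/eqP.
  by rewrite mul0r; exact: (loc0 HR hM1).
have [f [hf hf0 hfx]] := IH hs.
have [->|ha0] := eqVneq a 0.
  exists f; split => //; first by rewrite inE hf orbT.
  move=> x; rewrite inE => /orP [/eqP ->|/hfx //].
  by rewrite mul0r; exact: (loc0 HR hM1).
have haf : a / f != 0 by rewrite mulf_neq0 ?invr_eq0.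
case: (HP hM haf) => h.
  exists f; split => //; first by rewrite inE hf orbT.
  by move=> x; rewrite inE => /orP [/eqP ->|/hfx].
exists a; split => //; first by rewrite inE eqxx.
move=> x; rewrite inE => /orP [/eqP ->|hx]; first by rewrite divff.
have -> : x / a = (x / f) * (a / f)^-1 by field_nz.
exact: (locM HR hMp (hfx x hx) h).
Qed.

Lemma loc_common_denom M (s : seq K) f : t_max R M -> f != 0 ->
  (forall x, x \in s -> loc M (x / f)) ->
  exists t, [/\ R t, ~ M t & forall x, x \in s -> R (t * x / f)].
Proof.
move=> hM hf0; have hMp := tmax_prime HR hM.
elim: s => [|a s IH] hs; first by exists 1; split => //; [exact: subring1|exact: (tmax_not1 hM)].
have [|t1 [ht1 hnt1 h1]] := IH; first by move=> x hx; apply: hs; rewrite inE hx orbT.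
have [c [u [hc hu hnu e]]] := hs a (mem_head _ _).
have hu0 := ideal_neq0 (tmax_ideal hM) hnu.
exists (t1 * u); split; [exact: subringM|exact: (primeNM hMp)|].
move=> x; rewrite inE => /orP [/eqP ->|hx].
  have -> : t1 * u * a / f = t1 * c by rewrite -mulrA -mulrA e; field_nz.
  exact: subringM.
have -> : t1 * u * x / f = u * (t1 * x / f) by field_nz.
by apply: subringM => //; apply: h1.
Qed.

Lemma fg_t_invertible (s : seq K) : (forall x, x \in s -> R x) -> nonzero (span R s) ->
  t_invertible R (span R s).
Proof.
move=> hs hnz.
have hG : ideal R (span R s) by split; [exact: span_submod|exact: span_min (subring_submod HR) hs].
apply: t_invertible_tclos1 => //; apply: NNPP => h1.
have [hI hInz _] := trace_ideal HR hG hnz.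
have [M [hM hsub]] := exists_tmax_tclos HR hI hInz h1.
have [f [hf hf0 hfx]] := loc_min_generator hM (span_nonzero_gen HR hnz).
have [t [ht hnt htx]] := loc_common_denom hM hf0 hfx.
apply/hnt/hsub; rewrite -(divfK hf0 t) mulrC; apply: prod_single; first exact: span_mem.
by apply/(colon_spanP HR _ _ (subring_submod HR)) => x hx; rewrite mulrAC; apply: htx.
Qed.

Lemma trace_sub_tmax P : t_prime R P -> ~ t_invertible R P ->
  exists M, [/\ t_max R M, subset (Defs.prod P (colon R P)) M & subset P M].
Proof.
move=> [hPp [hPi hPnz _]] hni; have [hI hInz hPtr] := trace_ideal HR hPi hPnz.
have [|M [hM hsub]] := exists_tmax_tclos HR hI hInz.
  by move=> h1; apply/hni/(t_invertible_tclos1 HR hPi hPnz h1).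
by exists M; split => // y /hPtr /hsub.
Qed.

(* If [x] were not in [R_P], then [x^-1] would lie in [P R_P]; whichever of
   [1 / (x (x p))] and its inverse lies in [R_M] then contradicts either
   [x p \in M] or the primality of [P]. *)
Lemma loc_colon_trace P M x p : prime_ideal R P -> t_max R M ->
  subset (Defs.prod P (colon R P)) M -> subset P M ->
  colon R P x -> P p -> ~ P (x * p) -> loc P x.
Proof.
move=> hPp hM htrM hPM hx hp na; have [hPi _ _] := hPp; have hMi := tmax_ideal hM.
have ha : R (x * p) by apply: hx.
have haM : M (x * p) by apply: htrM; rewrite mulrC; apply: prod_single.
apply: NNPP => hxn.
have [q [s [hq hs hPq hns hxq]]] :=
  notin_loc_inv hPp (valuation_loc_sub_tmax hM hPM) hxn.
have ha0 := ideal_neq0 hPi na.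
have hx0 : x != 0 by apply: contra_neq ha0 => ->; rewrite mul0r.
have hp0 : p != 0 by apply: contra_neq ha0 => ->; rewrite mulr0.
have hxa : (x * (x * p))^-1 != 0 by rewrite invr_eq0 !mulf_neq0.
case: (HP hM hxa) => -[c [t [hc ht hnt e]]]; have ht0 := ideal_neq0 hMi hnt;
  have hct : c = c / t * t by rewrite divfK.
- rewrite -e in hct.
  have hPc : P c.
    have e1 : q * t = c * s * (x * p) by rewrite hct -hxq; field_nz.
    have : P (c * s * (x * p)) by rewrite -e1; exact: idealMr hPi ht hPq.
    move/(prime_cancel hPp (subringM HR hc hs) ha)/(_ na).
    by move/(prime_cancel hPp hc hs)/(_ hns).
  apply/hnt; have -> : t = x * c * (x * p) by rewrite hct; field_nz.
  exact: (idealM hMi (hx c hPc) haM).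
- rewrite -e invrK in hct.
  have hPt : ~ P t by move/hPM.
  have : P (c * q) by exact: idealM hPi hc hPq.
  have -> : c * q = x * p * s * t by rewrite hct -hxq; field_nz.
  apply: (primeNM hPp (subringM HR ha hs) ht _ hPt).
  exact: (primeNM hPp ha hs na hns).
Qed.

Lemma colon_tprime_mul P x p : t_prime R P -> ~ t_invertible R P ->
  colon R P x -> P p -> P (x * p).
Proof.
move=> hP hni hx hp; have [hPp _] := hP; have [hPi _ _] := hPp.
have [M [hM htrM hPM]] := trace_sub_tmax hP hni.
apply: NNPP => na; have ha : R (x * p) by apply: hx.
have [b [s [hb hs hns e]]] := loc_colon_trace hPp hM htrM hPM hx hp na.
have hs0 := ideal_neq0 hPi hns.
have : P (x * p * s) by rewrite e mulrAC divfK // mulrC; exact: idealMr hPi hb hp.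
by move/(prime_cancel hPp ha hs)/(_ hns).
Qed.

Lemma Eend_tprime_loc P x : t_prime R P -> Eend P x -> loc P x.
Proof.
move=> [hPp hPt] hx; apply: NNPP => hn.
have [M [hM hPM]] := exists_tmax HR hPt (prime_not1 hPp).
have [q [s [hq hs hPq hns hxq]]] := notin_loc_inv hPp (valuation_loc_sub_tmax hM hPM) hn.
by apply: hns; rewrite -hxq; apply: hx.
Qed.

Lemma loc_tmax_mul_prime P M x p : prime_ideal R P -> t_max R M -> subset P M ->
  loc P x -> P p -> loc M (x * p).
Proof.
move=> hP hM hPM [b [s [hb hs hns ->]]] hp; have [hPi _ _] := hP.
have hs0 := ideal_neq0 hPi hns; have hMp := tmax_prime HR hM.
have [->|hp0] := eqVneq p 0; first by rewrite mulr0; exact: (loc0 HR (tmax_not1 hM)).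
have hps : p / s != 0 by rewrite mulf_neq0 ?invr_eq0.
case: (HP hM hps) => h.
  have -> : b / s * p = b * (p / s) by field_nz.
  exact: (loc_subringM HR hMp hb h).
case: h => c [t [hc ht hnt e]]; have ht0 := ideal_neq0 (tmax_ideal hM) hnt.
have hct : c = c / t * t by rewrite divfK.
have e2 : s * t = c * p by rewrite hct -e; field_nz.
have : P (s * t) by rewrite e2; exact: idealM hPi hc hp.
by move/(prime_cancel hP hs ht)/(_ (fun h => hnt (hPM _ h))).
Qed.

Lemma Eend_tprime_colon P : t_prime R P -> ~ t_invertible R P ->
  seteq (Eend P) (colon R P).
Proof.
move=> hP hni x; have [[hPi _ _] _] := hP; split; last by move=> hx b; apply: colon_tprime_mul.
by move=> hx b hb; exact: ideal_sub hPi (hx b hb).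
Qed.

Lemma colon_tprime_loc_T_off P : t_prime R P -> ~ t_invertible R P ->
  seteq (colon R P) (cap (loc P) (T_off R P)).
Proof.
move=> hP hni x; have [hPp _] := hP; have [hPi _ _] := hPp.
split => [hx|[hl hT] b hb].
  split; first by apply/(Eend_tprime_loc hP)/(Eend_tprime_colon hP hni).
  by move=> M hM; apply: loc_colon_not_sub hx; [case: hPi|exact: tmax_ideal].
apply: (bigcap_loc_tmax HR HK) => M hM.
have [hPM|hPM] := classic (subset P M); first exact: loc_tmax_mul_prime hPp hM hPM hl hb.
by rewrite mulrC; apply: (loc_subringM HR (tmax_prime HR hM)); [exact: ideal_sub hPi hb|exact: hT].
Qed.

Lemma Eend_sub_S_min I x : t_ideal R I -> Eend I x -> S_min R I x.
Proof.
move=> hIt hx P hmin; have [hI _ _] := hIt; have [hPp hIP _] := hmin.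
have [M [hM hPM]] := min_prime_sub_tmax HR hIt hmin.
apply: NNPP => hn.
have [q [s [hq hs hPq hns hxq]]] := notin_loc_inv hPp (valuation_loc_sub_tmax hM hPM) hn.
have [u [n [hu hnu huI]]] := min_prime_witness HR hI hmin hPq.
have : P (u * s ^+ n) by rewrite -hxq exprMn mulrCA; apply: hIP; exact: EendX hx huI.
exact: primeNM hPp hu (subringX HR n hs) hnu (primeNX HR hPp hs hns).
Qed.

(* [loc_ext I M] is [I R_M], and [contr_rad I M] the contraction to [R] of its
   radical, which is prime as [R_M] is a valuation ring. *)
Definition loc_ext I M : K -> Prop := fun y => exists i t, [/\ I i, R t, ~ M t & y = i / t].

Definition contr_rad I M : K -> Prop := fun r => R r /\ exists n, loc_ext I M (r ^+ n).

Section ContractedRadical.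
Variables I M : K -> Prop.
Hypotheses (hM : t_max R M) (hI : ideal R I) (hIM : subset I M).

Let hMp := tmax_prime HR hM.
Let hMi := tmax_ideal hM.

Lemma loc_extM u y : loc M u -> loc_ext I M y -> loc_ext I M (u * y).
Proof.
move=> [c [t' [hc ht' hnt' ->]]] [i [t [hi ht hnt ->]]].
have ht0 := ideal_neq0 hMi hnt; have ht0' := ideal_neq0 hMi hnt'.
exists (c * i), (t' * t); split; [exact: (idealM hI)|exact: subringM|exact: (primeNM hMp)|field_nz].
Qed.

Lemma loc_ext_sub : subset I (loc_ext I M).
Proof.
move=> i hi; exists i, 1; split => //; [exact: subring1|exact: (tmax_not1 hM)|by rewrite divr1].
Qed.

Lemma loc_ext_cancel r n i t : R r -> I i -> R t -> ~ M t -> r ^+ n = i / t -> r ^+ n * t = i.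
Proof. by move=> hr hi ht hnt ->; rewrite divfK // (ideal_neq0 hMi hnt). Qed.

Lemma contr_rad_sub : subset (contr_rad I M) M.
Proof.
move=> r [hr [n [i [t [hi ht hnt e]]]]]; apply: NNPP => hnr.
apply: (primeNM hMp (subringX HR n hr) ht (primeNX HR hMp hr hnr) hnt).
by rewrite (loc_ext_cancel hr hi ht hnt e); apply: hIM.
Qed.

Lemma contr_radD_loc x y : contr_rad I M x -> R y -> x != 0 -> loc M (y / x) ->
  contr_rad I M (x + y).
Proof.
move=> [hx [n hn]] hy hx0 hl; split; first exact: subringD.
exists n; have -> : (x + y) ^+ n = (1 + y / x) ^+ n * x ^+ n.
  by rewrite -exprMn; congr (_ ^+ _); field_nz.
apply: loc_extM => //; apply: (locX HR n hMp); apply: (locD HR hMp) => //.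
exact: (subring_loc HR (tmax_not1 hM) (subring1 HR)).
Qed.

Lemma contr_rad_ideal : ideal R (contr_rad I M).
Proof.
split; last by move=> x [].
split.
- by split; [exact: subring0|exists 1%N; rewrite expr1; apply/loc_ext_sub/(ideal0 hI)].
- move=> x y hx hy; have [hRx _] := hx; have [hRy _] := hy.
  have [->|hx0] := eqVneq x 0; first by rewrite add0r.
  have [->|hy0] := eqVneq y 0; first by rewrite addr0.
  case: (loc_tmax_total hM hRx hRy hx0 hy0) => h; first exact: contr_radD_loc.
  by rewrite addrC; apply: contr_radD_loc.
- move=> r x hr [hx [n hn]]; split; first exact: subringM.
  exists n; rewrite exprMn; apply: loc_extM => //.
  exact: (subring_loc HR (tmax_not1 hM) (subringX HR n hr)).
Qed.

Lemma contr_rad_prime : prime_ideal R (contr_rad I M).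
Proof.
split; first exact: contr_rad_ideal.
  by apply: (not1_proper HR) => /contr_rad_sub; apply: (tmax_not1 hM).
move=> a b ha hb [hab [n hn]].
have [->|ha0] := eqVneq a 0; first by left; apply: ideal0 contr_rad_ideal.
have [->|hb0] := eqVneq b 0; first by right; apply: ideal0 contr_rad_ideal.
(* Whichever of [a], [b] is divisible by the other in [R_M] has its [2n]-th
   power in [I R_M]. *)
have key x y : R x -> x != 0 -> loc M (x / y) -> y != 0 -> x * y = a * b ->
    contr_rad I M x.
  move=> hx hx0 hl hy0 exy; split => //; exists (n + n)%N.
  have -> : x ^+ (n + n) = (x / y) ^+ n * (a * b) ^+ n.
    by rewrite -exy -exprMn exprD -exprMn; congr (_ ^+ _); field_nz.
  by apply: loc_extM => //; apply: (locX HR n hMp).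
case: (loc_tmax_total hM ha hb ha0 hb0) => h.
  by right; apply: (key b a) => //; rewrite mulrC.
by left; apply: (key a b).
Qed.

Lemma contr_rad_min : min_prime R I (contr_rad I M).
Proof.
split; first exact: contr_rad_prime.
  by move=> i hi; split; [exact: ideal_sub hI hi|exists 1%N; rewrite expr1; apply: loc_ext_sub].
move=> Q' hQ' hIQ' hQ'Q r [hr [n [i [t [hi ht hnt e]]]]].
have hQ't : ~ Q' t by move/hQ'Q/contr_rad_sub.
apply: (primeX HR hQ' hr (n := n)); apply: (prime_cancel hQ' (subringX HR n hr) ht _ hQ't).
by rewrite (loc_ext_cancel hr hi ht hnt e); apply: hIQ'.
Qed.

Lemma contr_rad_loc s i : R s -> ~ contr_rad I M s -> I i -> loc M (i / s).
Proof.
move=> hs hns hi; have hRi := ideal_sub hI hi.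
have [->|hi0] := eqVneq i 0; first by rewrite mul0r; exact: (loc0 HR (tmax_not1 hM)).
have hs0 : s != 0 by apply: contra_not_neq hns => ->; apply: ideal0 contr_rad_ideal.
case: (loc_tmax_total hM hs hRi hs0 hi0) => // h.
case: hns; split => //; exists 1%N; rewrite expr1.
have -> : s = (s / i) * i by rewrite divfK.
exact/loc_extM/loc_ext_sub.
Qed.

End ContractedRadical.

Lemma S_min_T_off_sub_colon I x : ideal R I -> S_min R I x -> T_off R I x -> colon R I x.
Proof.
move=> hI hS hT b hb; apply: (bigcap_loc_tmax HR HK) => M hM.
have [hIM|hIM] := classic (subset I M); last first.
  by rewrite mulrC; apply: (loc_subringM HR (tmax_prime HR hM)); [exact: ideal_sub hI hb|exact: hT].
have [c [s [hc hs hns ->]]] := hS _ (contr_rad_min hM hI hIM).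
rewrite -mulrA (mulrC s^-1); apply: (loc_subringM HR (tmax_prime HR hM)) => //.
exact: (contr_rad_loc hM hI hs hns hb).
Qed.

Lemma Eend_strong_t_ideal I : strong R I -> t_ideal R I ->
  seteq (Eend I) (cap (S_min R I) (T_off R I)).
Proof.
move=> hs hIt x; have [hI _ _] := hIt; rewrite (strong_Eend_colon hs x); split.
  move=> hx; split; first by apply: Eend_sub_S_min hIt _; apply/(strong_Eend_colon hs).
  by move=> M hM; apply: loc_colon_not_sub hx; [case: hI|exact: tmax_ideal].
by case=> hS hT; apply: S_min_T_off_sub_colon.
Qed.

Definition hull_off P (L : seq K) : K -> Prop := fun r =>
  R r /\ forall M, t_max R M -> ~ subset P M -> (forall a, a \in L -> M a) -> M r.

Lemma hull_off_radical_t_ideal P L p0 : p0 \in L -> p0 != 0 -> R p0 ->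
  t_ideal R (hull_off P L) /\ radical R (hull_off P L).
Proof.
move=> hp0 hp00 hRp0.
have hXi : ideal R (hull_off P L).
  split; last by move=> x [].
  split.
  - by split; [exact: subring0|move=> M hM _ _; exact: ideal0 (tmax_ideal hM)].
  - move=> x y [hx hx'] [hy hy']; split; first exact: subringD.
    by move=> M hM hn hL; exact: idealD (tmax_ideal hM) (hx' M hM hn hL) (hy' M hM hn hL).
  - move=> r x hr [hx hx']; split; first exact: subringM.
    by move=> M hM hn hL; exact: idealM (tmax_ideal hM) hr (hx' M hM hn hL).
split; last first.
  move=> x n hx [hxn hxn']; split => // M hM hn hL.
  exact: (primeX HR (tmax_prime HR hM) hx (hxn' M hM hn hL)).
have hXnz : nonzero (hull_off P L) by exists p0; split => //; split => // M hM hn; apply.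
split => // x; split; first exact: tclos_ext.
move=> /tclosP [s [hsnz hs hx]]; split.
  by apply: (@vclos_sub _ _ (span R s)) => // z /hs [].
move=> M hM hn hL; have [hMt _ _] := hM; apply: (t_ideal_vclos hMt hsnz _ hx).
by move=> z /hs [_ h]; apply: h.
Qed.

Lemma acc_finite_avoiding P : acc_radical_t R -> t_prime R P ->
  exists L : seq K, (forall x, x \in L -> P x) /\
    forall M, t_max R M -> ~ subset P M -> exists a, a \in L /\ ~ M a.
Proof.
move=> hacc hP; have [[hPi _ _] [_ [p0 [hp0 hp00]] _]] := hP.
have hRp0 := ideal_sub hPi hp0.
apply: NNPP => hn.
(* Otherwise iterating [hex] gives a strictly increasing chain of radical
   t-ideals [hull_off P (p0 :: Ls n)]. *)
have hex L : exists a, (forall x, x \in L -> P x) -> P a /\ ~ hull_off P (p0 :: L) a.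
  have [hL|] := classic (forall x, x \in L -> P x); last by exists 0.
  apply: NNPP => hna; apply: hn; exists (p0 :: L); split.
    by move=> x; rewrite inE => /orP [/eqP ->|/hL].
  move=> M hM hnM; apply: NNPP => hMa; apply: (hnM) => p hp; apply: NNPP => hMp.
  apply: hna; exists p => _; split => // -[_ h]; apply/hMp/(h M hM hnM) => a ha.
  by apply: NNPP => hna'; apply: hMa; exists a.
pose g L := proj1_sig (constructive_indefinite_description _ (hex L)).
have hg L : (forall x, x \in L -> P x) -> P (g L) /\ ~ hull_off P (p0 :: L) (g L).
  by rewrite /g; case: constructive_indefinite_description.
pose Ls := nat_rect (fun _ => seq K) [::] (fun _ L => g L :: L).
have hLs n x : x \in Ls n -> P x.
  elim: n x => [//|n IH] x; rewrite /= inE => /orP [/eqP ->|/IH //].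
  by case: (hg _ IH).
have [||N hN] := hacc (fun n => hull_off P (p0 :: Ls n)).
- by move=> n; apply: (@hull_off_radical_t_ideal P _ p0) => //; rewrite inE eqxx.
- move=> n x [hx hx']; split => // M hM hnM hL; apply: hx' => // a.
  rewrite inE => /orP [/eqP ->|ha]; apply: hL; first by rewrite inE eqxx.
  by rewrite inE /= inE ha !orbT.
have [hPg hng] := hg _ (hLs N); apply/hng/(proj1 (hN N.+1 (leqnSn N) (g (Ls N)))).
split; first exact: ideal_sub hPi hPg.
by move=> M hM hnM hL; apply: hL; rewrite /= !inE eqxx orbT.
Qed.

Section TMaxEend.
Variables (P : K -> Prop) (L : seq K).
Hypotheses (hP : t_prime R P) (hni : ~ t_invertible R P).
Hypotheses (hLP : forall x, x \in L -> P x)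
  (hLM : forall M, t_max R M -> ~ subset P M -> exists a, a \in L /\ ~ M a).

Lemma EendP x : Eend P x <-> loc P x /\ T_off R P x.
Proof. by rewrite (Eend_tprime_colon hP hni x) (colon_tprime_loc_T_off hP hni x). Qed.

Lemma Eend_frac_prime y b t : Eend P y -> P b -> R t -> ~ P t -> y = b / t -> P y.
Proof.
move=> hy hb ht hnt e; have [hPp _] := hP; have [hPi _ _] := hPp.
have hRy : R y.
  apply: (bigcap_loc_tmax HR HK) => M hM; have [hPM|hPM] := classic (subset P M).
    by rewrite e mulrC; apply: (loc_tmax_mul_prime hPp hM hPM) => //; exact: locV.
  by have [_ hT] := proj1 (EendP y) hy; apply: hT.
apply: (prime_cancel hPp hRy ht _ hnt).
by rewrite e divfK // (ideal_neq0 hPi hnt).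
Qed.

Lemma Eend_notin_inv y : Eend P y -> ~ P y -> y != 0 /\ loc P y^-1.
Proof.
move=> hy hny; have [[b [t [hb ht hnt e]] _]] := proj1 (EendP y) hy.
have [[hPi _ _] _] := hP.
have hnb : ~ P b by move=> hPb; apply/hny/(Eend_frac_prime hy hPb ht hnt e).
have hb0 := ideal_neq0 hPi hnb; have ht0 := ideal_neq0 hPi hnt.
split; first by rewrite e mulf_neq0 ?invr_eq0.
by exists t, b; split => //; rewrite e invf_div.
Qed.

Lemma Eend_of_loc w : loc P w -> (forall a, a \in L -> Eend P (w * a)) -> Eend P w.
Proof.
move=> hw hwa; apply/EendP; split => // M hM hnM.
have [a [ha hMa]] := hLM hM hnM; have hMp := tmax_prime HR hM.
have ha0 := ideal_neq0 (tmax_ideal hM) hMa.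
have hRa : R a by have [[hPi _ _] _] := hP; exact: ideal_sub hPi (hLP ha).
rewrite -(mulfK ha0 w); apply: (locM HR hMp); last exact: locV.
by have [_ hT] := proj1 (EendP _) (hwa a ha); apply: hT.
Qed.

Lemma tprime_ideal_Eend : ideal (Eend P) P.
Proof.
have [[hPi _ _] _] := hP.
split; last by move=> p hp b hb; exact: idealM hPi (ideal_sub hPi hp) hb.
by split; [exact: ideal0 hPi|move=> x y; apply: idealD hPi|move=> r x hr; apply: hr].
Qed.

Lemma colon_span_cat_sub_colon (s : seq K) x : Eend P x -> ~ P x ->
  vclos (Eend P) (span (Eend P) s) x -> subset (colon R (span R (s ++ L))) (colon R P).
Proof.
move=> hx hnx hv w hw; have [[hPi _ _] _] := hP.
have hES := Eend_subring HR (proj1 hPi).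
have [hx0 hxi] := Eend_notin_inv hx hnx.
have hw' := proj1 (colon_spanP HR _ _ (subring_submod HR)) hw.
have hwE : colon (Eend P) (span (Eend P) s) w.
  apply/(colon_spanP hES _ _ (subring_submod hES)) => y hy.
  by apply: (subring_Eend (proj1 hPi)); apply: hw'; rewrite mem_cat hy.
have hlw : loc P w.
  rewrite -(mulKf hx0 w); apply: (locM HR (proj1 hP)) => //.
  by have [] := proj1 (EendP _) (hv w hwE).
apply/(Eend_tprime_colon hP hni)/Eend_of_loc => // a ha.
by apply: (subring_Eend (proj1 hPi)); apply: hw'; rewrite mem_cat ha orbT.
Qed.

Lemma tprime_t_ideal_Eend : t_ideal (Eend P) P.
Proof.
have [[hPi _ _] [_ hPnz _]] := hP; have hES := Eend_subring HR (proj1 hPi).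
have hPE := tprime_ideal_Eend.
split => // x; split; first exact: tclos_ext.
move=> /tclosP [s [hsnz hsP hx]]; apply: NNPP => hnx.
have hEx : Eend P x.
  by apply: (@vclos_sub _ _ (span (Eend P) s)) hx => y /hsP; case: hPE => _; apply.
have hsL : forall y, y \in s ++ L -> R y.
  move=> y; rewrite mem_cat => /orP [hy|/hLP]; last exact: (ideal_sub hPi).
  by apply: (ideal_sub hPi); apply: hsP; apply: (span_mem hES).
have hGnz : nonzero (span R (s ++ L)).
  have [y [hy hy0]] := span_nonzero_gen hES hsnz.
  by exists y; split => //; apply: (span_mem HR); rewrite mem_cat hy.
apply/hni/(t_invertible_tclos1 HR hPi hPnz).
move: (proj2 (fg_t_invertible hsL hGnz 1) (subring1 HR)); apply: tclos_mono; apply: prod_mono.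
  apply: span_min => //; first by case: hPi.
  move=> y; rewrite mem_cat => /orP [hy|/hLP //].
  by apply: hsP; apply: (span_mem hES).
exact: (colon_span_cat_sub_colon hEx hnx hx).
Qed.

Lemma tprime_t_max_Eend : t_max (Eend P) P.
Proof.
have [hPp _] := hP; have [hPi _ _] := hPp; have hES := Eend_subring HR (proj1 hPi).
split; [exact: tprime_t_ideal_Eend|exact: (not1_proper hES (prime_not1 hPp))|].
move=> J hJ hJp hPJ y hy; apply: NNPP => hny; have [[hJm hJE] _ _] := hJ.
have [hy0 hyi] := Eend_notin_inv (hJE y hy) hny.
have hFJ : subset (span (Eend P) (y :: L)) J.
  apply: span_min => // z; rewrite inE => /orP [/eqP -> //|/hLP].
  exact: hPJ.
have hFnz : nonzero (span (Eend P) (y :: L)).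
  by exists y; split => //; apply: (span_mem hES); rewrite inE eqxx.
apply: (proper_not1 (conj hJm hJE) hJp); apply: (t_ideal_vclos hJ hFnz hFJ) => b hb.
have hb' := proj1 (colon_spanP hES _ _ (subring_submod hES)) hb.
rewrite mul1r; apply: Eend_of_loc => [|a ha]; last by apply: hb'; rewrite inE ha orbT.
have [hby _] := proj1 (EendP _) (hb' y (mem_head _ _)).
by rewrite -(mulfK hy0 b); apply: (locM HR hPp).
Qed.

End TMaxEend.

End PvMD.

Theorem proposition1p6 (K : fieldType) (R : K -> Prop)
  (HR : is_subring R) (HK : is_quotient_field R) (HKR : exists x, ~ R x)
  (HP : PvMD R) :
  (forall I, strong R I -> t_ideal R I ->
     seteq (Eend I) (cap (S_min R I) (T_off R I)))
  /\
  (forall P, t_prime R P -> ~ t_invertible R P ->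
     seteq (Eend P) (colon R P) /\
     seteq (colon R P) (cap (localization R P) (T_off R P)))
  /\
  (acc_radical_t R ->
   forall P, t_prime R P -> ~ t_invertible R P -> t_max (Eend P) P).
Proof.
split; first exact: Eend_strong_t_ideal.
split=> [P hP hni|hacc P hP hni].
  by split; [exact: Eend_tprime_colon|exact: colon_tprime_loc_T_off].
have [L [hLP hLM]] := acc_finite_avoiding HR hacc hP.
exact: tprime_t_max_Eend hP hni hLP hLM.
Qed.
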